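(* Let $\alpha>1$ and let $u_0:[0,\infty)\to[0,\infty)$ be of class $C^1$ and non-decreasing, with $m_0(\rho)=\int_0^\rho u_0(\sigma)\,d\sigma$. For $t\ge 0$ define $P_t(\rho_0)=\rho_0+\alpha\, m_0(\rho_0)\,u_0(\rho_0)^{\alpha-1}\,t$. Then for every $t\ge0$ the map $P_t:[0,\infty)\to[0,\infty)$ is a bijection with $\frac{dP_t}{d\rho_0}\ge 1$, and the function $$u(t,\rho)=\begin{cases}\big(u_0(P_t^{-1}(\rho))^{-\alpha}+\alpha t\big)^{-1/\alpha}, & u_0(P_t^{-1}(\rho))\neq 0,\\ 0,& u_0(P_t^{-1}(\rho))=0,\end{cases}$$ is continuous and $C^1$, and $m(t,\rho)=\int_0^\rho u(t,\sigma)\,d\sigma$ is a global classical ($C^1$) solution of the mass equation $m_t+m\,(m_\rho)^\alpha=0$ on $(0,\infty)\times(0,\infty)$ with $m(0,\cdot)=m_0$ and $m(t,0)=0$.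
   Context: Radially symmetric densities $u(t,x)\ge0$ on $\mathbb R^d$ are written as functions of a volume variable $\rho\ge0$ (proportional to $|x|^d$), and the mass function is $m(t,\rho)=\int_0^\rho u(t,\sigma)\,d\sigma$, so $u=m_\rho$. The ''mass equation'' associated with $u_t=\nabla\cdot(u^\alpha\nabla v)$, $-\Delta v=u$, is $m_t+m\,(m_\rho)^\alpha=0$. A classical solution is a $C^1$ function satisfying this equation pointwise. *)

From Stdlib Require Import Reals.
From Coquelicot Require Import Coquelicot.
Open Scope R_scope.

(* Real power with exponent a, for base x >= 0; convention 0^a = 0
   (used only with a > 0, where this is the usual value). *)
Definition rpow (x a : R) : R := if Rle_dec x 0 then 0 else Rpower x a.

Definition C1_nonneg (f : R -> R) : Prop :=
  exists f' : R -> R,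
    (forall x, 0 <= x ->
       filterlim (fun y => (f y - f x) / (y - x))
                 (within (fun y => 0 <= y /\ y <> x) (locally x))
                 (locally (f' x))) /\
    (forall x, 0 <= x ->
       filterlim f' (within (fun y => 0 <= y) (locally x)) (locally (f' x))).

Definition mass0 (u0 : R -> R) (rho : R) : R := RInt u0 0 rho.

Definition Pmap (alpha : R) (u0 : R -> R) (t rho0 : R) : R :=
  rho0 + alpha * mass0 u0 rho0 * rpow (u0 rho0) (alpha - 1) * t.

Definition usol (alpha : R) (u0 : R -> R) (Pinv : R -> R -> R) (t rho : R) : R :=
  let a := u0 (Pinv t rho) in
  if Req_EM_T a 0 then 0
  else Rpower (Rpower a (- alpha) + alpha * t) (- (1 / alpha)).

Definition msol (alpha : R) (u0 : R -> R) (Pinv : R -> R -> R) (t rho : R) : R :=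
  RInt (fun s => usol alpha u0 Pinv t s) 0 rho.

Definition openQ (p : R * R) : Prop := 0 < fst p /\ 0 < snd p.
Definition closedQ (p : R * R) : Prop := 0 <= fst p /\ 0 <= snd p.

Definition d1 (f : R -> R -> R) (p : R * R) : R := Derive (fun s => f s (snd p)) (fst p).
Definition d2 (f : R -> R -> R) (p : R * R) : R := Derive (fun r => f (fst p) r) (snd p).

Definition C1_openQ (f : R -> R -> R) : Prop :=
  forall p : R * R, openQ p ->
    ex_derive (fun s => f s (snd p)) (fst p) /\
    ex_derive (fun r => f (fst p) r) (snd p) /\
    continuous (d1 f) p /\ continuous (d2 f) p.

Definition cont_closedQ (f : R -> R -> R) : Prop :=
  forall p : R * R, closedQ p ->
    filterlim (fun q : R * R => f (fst q) (snd q))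
              (within closedQ (locally p)) (locally (f (fst p) (snd p))).

(* The proof follows the method of characteristics.  Writing
   vel(x) = alpha m0(x) u0(x)^(alpha-1), the characteristic map is
   P_t(x) = x + t vel(x).  Since u0 and m0 are non-decreasing, so is vel, hence
   P_t expands distances (|P_t y - P_t x| >= |y - x|); it is therefore a
   bijection of [0,oo) with a 1-Lipschitz inverse Q_t, and dP_t/dx =
   1 + t vel'(x) >= 1.  Along the characteristic from x, with
   dil = 1 + alpha t u0(x)^alpha, the solution is u = u0(x) dil^(-1/alpha)
   and the mass is m = m0(x) dil^((alpha-1)/alpha).  Composing with x = Q_t(r)
   and differentiating (Q_t is differentiated implicitly), two algebraic
   identities give m_r = u and m_t = - m u^alpha.  Finally m(t, .) is the
   primitive of u(t, .) vanishing at 0, so it coincides with the function msol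
   of the statement. *)

From Stdlib Require Import Reals Lra ClassicalEpsilon.
From Coquelicot Require Import Coquelicot.
Open Scope R_scope.

Lemma within_limit_epsdel (f : R -> R) (D : R -> Prop) x l :
  filterlim f (within D (locally x)) (locally l) ->
  forall eps, 0 < eps -> exists del, 0 < del /\
    forall y, Rabs (y - x) < del -> D y -> Rabs (f y - l) < eps.
Proof.
  intros H eps He. rewrite filterlim_locally in H.
  destruct (H (mkposreal eps He)) as [d Hd].
  exists d. split; [apply cond_pos|]. intros y Hy Dy. apply (Hd y Hy Dy).
Qed.

Lemma continuous_of_epsdel (f : R -> R) x :
  (forall eps, 0 < eps -> exists del, 0 < del /\
    forall y, Rabs (y - x) < del -> Rabs (f y - f x) < eps) -> continuous f x.
Proof.
  intros H. unfold continuous. rewrite filterlim_locally. intros eps.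
  destruct (H eps (cond_pos eps)) as [d [Hd H1]].
  exists (mkposreal d Hd). intros y Hy. apply H1. exact Hy.
Qed.

Lemma continuous_epsdel (f : R -> R) x : continuous f x ->
  forall eps, 0 < eps -> exists del, 0 < del /\
    forall y, Rabs (y - x) < del -> Rabs (f y - f x) < eps.
Proof.
  intros H eps He. unfold continuous in H. rewrite filterlim_locally in H.
  destruct (H (mkposreal eps He)) as [d Hd]. exists d; split; [apply cond_pos|].
  intros y Hy. apply (Hd y Hy).
Qed.

Lemma continuous2_of_epsdel (f : R * R -> R) p :
  (forall eps, 0 < eps -> exists del, 0 < del /\
    forall q, Rabs (fst q - fst p) < del -> Rabs (snd q - snd p) < del ->
      Rabs (f q - f p) < eps) -> continuous f p.
Proof.
  intros H. unfold continuous. rewrite filterlim_locally. intros eps.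
  destruct (H eps (cond_pos eps)) as [d [Hd H1]].
  exists (mkposreal d Hd). intros [a b] [Ha Hb]. apply H1; assumption.
Qed.

Lemma locally_of_ball (P : R -> Prop) x del : 0 < del ->
  (forall y, Rabs (y - x) < del -> P y) -> locally x P.
Proof. intros Hd H. exists (mkposreal del Hd). intros y Hy. apply H. exact Hy. Qed.

Lemma locally2_of_ball (P : R * R -> Prop) p del : 0 < del ->
  (forall q, Rabs (fst q - fst p) < del -> Rabs (snd q - snd p) < del -> P q) ->
  locally p P.
Proof.
  intros Hd H. exists (mkposreal del Hd). intros [a b] [Ha Hb]. apply H; assumption.
Qed.

Lemma continuous2_snd_slice (f : R * R -> R) t r : continuous f (t, r) ->
  continuous (fun y => f (t, y)) r.
Proof.
  intro H. apply continuous_of_epsdel. intros eps He.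
  unfold continuous in H. rewrite filterlim_locally in H.
  destruct (H (mkposreal eps He)) as [d Hd]. exists d; split; [apply cond_pos|].
  intros y Hy. apply (Hd (t, y)). split; [|exact Hy].
  apply ball_center.
Qed.

Lemma continuous_squeeze (f g : R -> R) x del : 0 < del ->
  f x = 0 -> g x = 0 -> continuous g x ->
  (forall y, Rabs (y - x) < del -> Rabs (f y) <= g y) -> continuous f x.
Proof.
  intros Hdel Hf Hg Hc Hb. apply continuous_of_epsdel. intros eps He.
  destruct (continuous_epsdel g x Hc eps He) as [d [Hd H]].
  exists (Rmin d del); split; [apply Rmin_pos; lra|]. intros y Hy.
  specialize (H y (Rlt_le_trans _ _ _ Hy (Rmin_l _ _))).
  specialize (Hb y (Rlt_le_trans _ _ _ Hy (Rmin_r _ _))).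
  rewrite Hf, Rminus_0_r. rewrite Hg, Rminus_0_r in H.
  apply Rle_lt_trans with (1 := Hb). apply Rabs_def2 in H. lra.
Qed.

Lemma derivable_ext_loc f g x l del : 0 < del ->
  (forall y, Rabs (y - x) < del -> f y = g y) ->
  derivable_pt_lim f x l -> derivable_pt_lim g x l.
Proof.
  intros Hd Hfg H. apply is_derive_Reals. apply is_derive_Reals in H.
  apply (is_derive_ext_loc f g x l); [|exact H].
  apply locally_of_ball with del; [exact Hd|]. exact Hfg.
Qed.

Lemma derivable_continuous f x l : derivable_pt_lim f x l -> continuous f x.
Proof.
  intro H. apply (@ex_derive_continuous R_AbsRing R_NormedModule). exists l.
  apply is_derive_Reals. exact H.
Qed.

Lemma Rpower_continuous x c : 0 < x -> continuous (fun y => Rpower y c) x.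
Proof.
  intro Hx. apply (derivable_continuous _ _ (c * Rpower x (c - 1))).
  apply derivable_pt_lim_power. exact Hx.
Qed.

(* Product rule at a zero of the differentiable factor: the other factor only
   needs to be continuous.  This handles the degenerate points where u0
   vanishes. *)
Lemma derivable_mult_vanishing f g x l :
  f x = 0 -> derivable_pt_lim f x l -> continuous g x ->
  derivable_pt_lim (fun y => f y * g y) x (l * g x).
Proof.
  intros Hf0 Hf Hg eps He.
  set (K := Rabs l + 1). assert (HK : 0 < K) by (unfold K; pose proof (Rabs_pos l); lra).
  set (G := Rabs (g x) + 1). assert (HG : 0 < G) by (unfold G; pose proof (Rabs_pos (g x)); lra).
  destruct (continuous_epsdel g x Hg (eps / (4 * K)) ltac:(apply Rdiv_lt_0_compat; lra))
    as [d1 [Hd1 H1]].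
  destruct (Hf (Rmin 1 (eps / (4 * G))) ltac:(apply Rmin_pos; [lra| apply Rdiv_lt_0_compat; lra]))
    as [d2 H2].
  exists (mkposreal (Rmin d1 d2) (Rmin_pos _ _ Hd1 (cond_pos d2))). simpl. intros h Hh Hhd.
  specialize (H1 (x + h) ltac:(replace (x + h - x) with h by ring;
                               exact (Rlt_le_trans _ _ _ Hhd (Rmin_l _ _)))).
  specialize (H2 h Hh (Rlt_le_trans _ _ _ Hhd (Rmin_r _ _))).
  rewrite Hf0, Rminus_0_r in H2. rewrite Hf0, Rmult_0_l, Rminus_0_r.
  set (q := f (x + h) / h) in *.
  replace (f (x + h) * g (x + h) / h - l * g x)
    with (q * (g (x + h) - g x) + (q - l) * g x) by (unfold q; field; exact Hh).
  assert (Hq1 : Rabs (q - l) <= 1) by (pose proof (Rmin_l 1 (eps / (4 * G))); lra).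
  assert (Hq2 : Rabs (q - l) <= eps / (4 * G)) by (pose proof (Rmin_r 1 (eps / (4 * G))); lra).
  assert (Hq : Rabs q <= K).
  { unfold K. pose proof (Rabs_triang_inv q l). lra. }
  eapply Rle_lt_trans; [apply Rabs_triang|]. rewrite !Rabs_mult.
  assert (A : Rabs q * Rabs (g (x + h) - g x) <= K * (eps / (4 * K))).
  { apply Rmult_le_compat; try apply Rabs_pos; lra. }
  assert (B : Rabs (q - l) * Rabs (g x) <= eps / (4 * G) * G).
  { apply Rmult_le_compat; try apply Rabs_pos; unfold G in *; lra. }
  replace (K * (eps / (4 * K))) with (eps / 4) in A by (field; lra).
  replace (eps / (4 * G) * G) with (eps / 4) in B by (field; lra).
  lra.
Qed.

Lemma derivative_nonneg_of_mono f x l : (forall y z, y <= z -> f y <= f z) ->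
  derivable_pt_lim f x l -> 0 <= l.
Proof.
  intros Hm H. destruct (Rle_dec 0 l) as [|Hn]; [assumption| exfalso].
  destruct (H (- l) ltac:(lra)) as [d Hd].
  assert (Hd2 : 0 < d / 2) by (pose proof (cond_pos d); lra).
  specialize (Hd (d / 2) ltac:(lra) ltac:(rewrite Rabs_right by lra; pose proof (cond_pos d); lra)).
  assert (0 <= (f (x + d / 2) - f x) / (d / 2)).
  { apply Rdiv_le_0_compat; [| exact Hd2]. pose proof (Hm x (x + d/2) ltac:(lra)). lra. }
  apply Rabs_def2 in Hd. lra.
Qed.

Lemma RInt_primitive_right (F f : R -> R) a b : a <= b ->
  (forall x, a < x -> derivable_pt_lim F x (f x)) ->
  (forall x, continuous f x) -> continuous F a ->
  RInt f a b = F b - F a.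
Proof.
  intros Hab HF Hf HFa.
  assert (Hex : forall c d, ex_RInt f c d)
    by (intros c d; apply (@ex_RInt_continuous R_CompleteNormedModule); intros; apply Hf).
  (* G e = int_a^e f - F e is constant on (a, b] and continuous at a. *)
  set (G := fun e => RInt f a e - F e).
  assert (HG : forall e, a < e <= b -> G e = G b).
  { intros e He. unfold G.
    rewrite <- (RInt_Chasles f a e b) by apply Hex.
    assert (E : RInt f e b = F b - F e).
    { apply is_RInt_unique.
      apply (@is_RInt_derive R_CompleteNormedModule F f e b).
      - intros x Hx. rewrite Rmin_left, Rmax_right in Hx by lra.
        apply is_derive_Reals. apply HF; lra.
      - intros x _. apply Hf. }
    rewrite E. simpl. unfold plus. simpl. ring. }
  assert (HGa : G a = - F a) by (unfold G; rewrite RInt_point; unfold zero; simpl; ring).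
  assert (HGc : continuous G a).
  { unfold G. apply (continuous_plus (fun e => RInt f a e) (fun e => opp (F e))).
    - apply (@ex_derive_continuous R_AbsRing R_NormedModule). exists (f a).
      apply (@is_derive_RInt R_NormedModule f (RInt f a) a a).
      + exists (mkposreal 1 Rlt_0_1). intros c _.
        apply (@RInt_correct R_CompleteNormedModule). apply Hex.
      + apply Hf.
    - apply (continuous_opp F). exact HFa. }
  destruct (Req_dec a b) as [<-|Hne].
  { rewrite RInt_point. unfold zero; simpl. ring. }
  destruct (Req_dec (G b) (G a)) as [E|Hnz].
  { rewrite HGa in E. unfold G in E. lra. }
  exfalso.
  destruct (continuous_epsdel G a HGc (Rabs (G b - G a))
              ltac:(apply Rabs_pos_lt; lra)) as [d [Hd0 H]].
  set (e := Rmin (a + d / 2) b).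
  assert (He : a < e <= b) by (unfold e; split; [apply Rmin_glb_lt; lra| apply Rmin_r]).
  assert (He2 : e <= a + d / 2) by apply Rmin_l.
  specialize (H e ltac:(rewrite Rabs_right; lra)).
  rewrite HG in H by exact He. lra.
Qed.

Lemma implicit_derivative (F : R -> R -> R) (phi : R -> R) t Fs Fy L del :
  0 < del -> Fy <> 0 ->
  differentiable_pt_lim F t (phi t) Fs Fy ->
  (forall s, Rabs (s - t) < del -> F s (phi s) = F t (phi t)) ->
  (forall s, Rabs (s - t) < del -> Rabs (phi s - phi t) <= L * Rabs (s - t)) ->
  derivable_pt_lim phi t (- Fs / Fy).
Proof.
  intros Hdel HFy HF Hconst Hlip eps He.
  set (K := Rabs L + 1). assert (HK : 0 < K) by (unfold K; pose proof (Rabs_pos L); lra).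
  assert (HaF : 0 < Rabs Fy) by (apply Rabs_pos_lt; exact HFy).
  destruct (HF (mkposreal (eps * Rabs Fy / (2 * K)) ltac:(apply Rdiv_lt_0_compat; nra)))
    as [d1 Hd1]. simpl in Hd1.
  assert (Hpos : 0 < Rmin del (d1 / K))
    by (apply Rmin_pos; [lra| apply Rdiv_lt_0_compat; [apply cond_pos| lra]]).
  exists (mkposreal _ Hpos). simpl. intros h Hh Hhd.
  assert (Hah : 0 < Rabs h) by (apply Rabs_pos_lt; exact Hh).
  assert (Hh1 : Rabs (t + h - t) < del)
    by (replace (t + h - t) with h by ring; exact (Rlt_le_trans _ _ _ Hhd (Rmin_l _ _))).
  assert (HhK : K * Rabs h < d1).
  { apply Rlt_le_trans with (K * (d1 / K)); [| right; field; lra].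
    apply Rmult_lt_compat_l; [lra| exact (Rlt_le_trans _ _ _ Hhd (Rmin_r _ _))]. }
  set (k := phi (t + h) - phi t).
  assert (Hk : Rabs k <= K * Rabs h).
  { specialize (Hlip (t + h) Hh1). replace (t + h - t) with h in Hlip by ring.
    fold k in Hlip. unfold K. pose proof (Rle_abs L). pose proof (Rabs_pos h). nra. }
  assert (HK1 : Rabs h <= K * Rabs h) by (unfold K; pose proof (Rabs_pos L); nra).
  specialize (Hd1 (t + h) (phi (t + h)) ltac:(replace (t + h - t) with h by ring; lra)
                ltac:(fold k; lra)).
  rewrite (Hconst (t + h) Hh1) in Hd1. replace (t + h - t) with h in Hd1 by ring. fold k in Hd1.
  assert (Hlin : Rabs (Fs * h + Fy * k) <= eps * Rabs Fy / (2 * K) * (K * Rabs h)).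
  { replace (Fs * h + Fy * k) with (- (F t (phi t) - F t (phi t) - (Fs * h + Fy * k))) by ring.
    rewrite Rabs_Ropp. eapply Rle_trans; [exact Hd1|].
    apply Rmult_le_compat_l; [apply Rlt_le, Rdiv_lt_0_compat; nra|].
    apply Rmax_lub; lra. }
  replace (k / h - - Fs / Fy) with ((Fs * h + Fy * k) / (Fy * h))
    by (field; split; assumption).
  unfold Rdiv. rewrite Rabs_mult, Rabs_inv, Rabs_mult.
  apply Rle_lt_trans with (eps * Rabs Fy / (2 * K) * (K * Rabs h) * / (Rabs Fy * Rabs h)).
  { apply Rmult_le_compat_r; [left; apply Rinv_0_lt_compat; nra| exact Hlin]. }
  replace (eps * Rabs Fy / (2 * K) * (K * Rabs h) * / (Rabs Fy * Rabs h)) with (eps / 2)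
    by (field; lra). lra.
Qed.

Lemma DF_val f x y lx ly lx' ly' : differentiable_pt_lim f x y lx ly ->
  lx = lx' -> ly = ly' -> differentiable_pt_lim f x y lx' ly'.
Proof. intros H -> ->. exact H. Qed.

Lemma DF_linear a b x y : differentiable_pt_lim (fun u v => a * u + b * v) x y a b.
Proof.
  intros eps. exists eps. intros u v _ _.
  replace (a * u + b * v - (a * x + b * y) - (a * (u - x) + b * (v - y))) with 0 by ring.
  rewrite Rabs_R0. apply Rmult_le_pos; [left; apply cond_pos|].
  apply Rle_trans with (Rabs (u - x)); [apply Rabs_pos| apply Rmax_l].
Qed.

Lemma DF_bilin c0 c x y :
  differentiable_pt_lim (fun u v => c0 + c * u * v) x y (c * y) (c * x).
Proof.
  intros eps.
  assert (Hc : 0 < Rabs c + 1) by (pose proof (Rabs_pos c); lra).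
  exists (mkposreal (eps / (Rabs c + 1)) ltac:(apply Rdiv_lt_0_compat; [apply cond_pos| lra])).
  intros u v Hu Hv. simpl in Hu, Hv.
  replace (c0 + c * u * v - (c0 + c * x * y) - (c * y * (u - x) + c * x * (v - y)))
    with (c * (v - y) * (u - x)) by ring.
  rewrite !Rabs_mult.
  assert (Hcv : Rabs c * Rabs (v - y) <= eps).
  { apply Rle_trans with (Rabs c * (eps / (Rabs c + 1))).
    - apply Rmult_le_compat_l; [apply Rabs_pos| lra].
    - apply Rle_trans with ((Rabs c + 1) * (eps / (Rabs c + 1))); [| right; field; lra].
      apply Rmult_le_compat_r; [apply Rlt_le, Rdiv_lt_0_compat; [apply cond_pos| lra]| lra]. }
  apply Rmult_le_compat; [apply Rmult_le_pos; apply Rabs_pos| apply Rabs_pos| exact Hcv| apply Rmax_l].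
Qed.

Lemma DF_mult x y : differentiable_pt_lim (fun u v => u * v) x y y x.
Proof.
  eapply differentiable_pt_lim_ext; [| eapply DF_val; [apply (DF_bilin 0 1 x y)| ring| ring]].
  apply locally_2d_forall. intros u v. ring.
Qed.

Lemma DF_snd f x y l : derivable_pt_lim f y l -> differentiable_pt_lim (fun u v => f v) x y 0 l.
Proof.
  intro H. replace y with (0 * x + 1 * y) in H by ring.
  pose proof (differentiable_pt_lim_comp (fun a b => f a) (fun u v => 0 * u + 1 * v)
    (fun u v => 1 * u + 0 * v) x y l 0 0 1 1 0
    (differentiable_pt_lim_proj1_0 _ _ _ _ H) (DF_linear 0 1 x y) (DF_linear 1 0 x y)) as K.
  eapply differentiable_pt_lim_ext; [| eapply DF_val; [exact K| ring| ring]].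
  apply locally_2d_forall. intros u v. f_equal. ring.
Qed.

Lemma DF_sub f g x y fx fy gx gy :
  differentiable_pt_lim f x y fx fy -> differentiable_pt_lim g x y gx gy ->
  differentiable_pt_lim (fun u v => f u v - g u v) x y (fx - gx) (fy - gy).
Proof.
  intros Hf Hg.
  pose proof (differentiable_pt_lim_comp (fun a b => 1 * a + (-1) * b) f g x y 1 (-1)
    fx fy gx gy (DF_linear 1 (-1) (f x y) (g x y)) Hf Hg) as K.
  eapply differentiable_pt_lim_ext; [| eapply DF_val; [exact K| ring| ring]].
  apply locally_2d_forall. intros u v. ring.
Qed.

Lemma continuous_fst' (p : R * R) : continuous (fun z : R * R => fst z) p.
Proof. destruct p. apply continuous_fst. Qed.

Lemma continuous_of_fst (g : R -> R) (p : R * R) : continuous g (fst p) ->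
  continuous (fun z : R * R => g (fst z)) p.
Proof. intro H. apply (continuous_comp (fun z => fst z) g p (continuous_fst' p) H). Qed.

Lemma continuous_of_snd (g : R -> R) (p : R * R) : continuous g (snd p) ->
  continuous (fun z : R * R => g (snd z)) p.
Proof.
  intro H. apply (continuous_comp (fun z => snd z) g p); [|exact H].
  destruct p. apply continuous_snd.
Qed.

Lemma continuous_inv2 (f : R * R -> R) p : continuous f p -> f p <> 0 ->
  continuous (fun z => / f z) p.
Proof.
  intros Hf H. apply (continuous_comp f (fun z => / z) p Hf).
  apply continuity_pt_filterlim.
  apply (continuity_pt_inv (fun z => z) (f p)); [apply continuity_pt_id| exact H].
Qed.

Ltac continuity2 := repeat match goal with
  | |- continuous (fun z => @?A z + @?B z) ?p => apply (continuous_plus A B p)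
  | |- continuous (fun z => @?A z * @?B z) ?p => apply (continuous_mult A B p)
  | |- continuous (fun z => - @?A z) ?p => apply (continuous_opp A p)
  | |- continuous (fun _ => ?c) ?p => apply (continuous_const c p)
  | |- continuous (fun z => fst z) ?p => apply (continuous_fst' p)
  | |- continuous (fun z => ?g (snd z)) ?p => apply (continuous_of_snd g p)
  | |- continuous (fun z => ?g (fst z)) ?p => apply (continuous_of_fst g p)
  end.

Lemma Rpower_pos x a : 0 < Rpower x a.
Proof. unfold Rpower. apply exp_pos. Qed.

Lemma Rpower_1_base c : Rpower 1 c = 1.
Proof. unfold Rpower. rewrite ln_1, Rmult_0_r, exp_0. reflexivity. Qed.

Lemma rpow_pos x a : 0 < x -> rpow x a = Rpower x a.
Proof. intro H. unfold rpow. destruct (Rle_dec x 0); [lra|reflexivity]. Qed.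

Lemma rpow_npos x a : x <= 0 -> rpow x a = 0.
Proof. intro H. unfold rpow. destruct (Rle_dec x 0); [reflexivity|lra]. Qed.

Lemma rpow_ge0 x a : 0 <= rpow x a.
Proof. unfold rpow. destruct (Rle_dec x 0); [lra| left; apply Rpower_pos]. Qed.

Lemma rpow_mono x y a : 0 < a -> x <= y -> rpow x a <= rpow y a.
Proof.
  intros Ha Hxy. destruct (Rle_dec x 0).
  - rewrite rpow_npos by lra. apply rpow_ge0.
  - rewrite !rpow_pos by lra. apply Rle_Rpower_l; lra.
Qed.

Lemma rpow_peel y c : 0 <= y -> rpow y c = y * rpow y (c - 1).
Proof.
  intro H. destruct (Req_dec y 0) as [->|Hne].
  - rewrite rpow_npos by lra. ring.
  - rewrite !rpow_pos by lra. replace c with (1 + (c - 1)) at 1 by ring.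
    rewrite Rpower_plus, Rpower_1 by lra. reflexivity.
Qed.

Lemma rpow_continuous a : 0 < a -> forall x, continuous (fun y => rpow y a) x.
Proof.
  intros Ha x. destruct (Rtotal_order x 0) as [Hx|[Hx|Hx]].
  - apply continuous_ext_loc with (fun _ => 0); [| apply continuous_const].
    apply locally_of_ball with (-x); [lra|]. intros y Hy. apply Rabs_def2 in Hy.
    rewrite rpow_npos by lra. reflexivity.
  - (* at 0: y^a < e as soon as y < e^(1/a) *)
    subst x. apply continuous_of_epsdel. intros eps He.
    exists (Rpower eps (1 / a)). split; [apply Rpower_pos|].
    intros y Hy. rewrite (rpow_npos 0), !Rminus_0_r by lra. rewrite Rminus_0_r in Hy.
    rewrite Rabs_right by (apply Rle_ge, rpow_ge0). apply Rabs_def2 in Hy.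
    destruct (Rle_dec y 0); [rewrite rpow_npos by lra; exact He|].
    rewrite rpow_pos by lra.
    replace eps with (Rpower (Rpower eps (1 / a)) a)
      by (rewrite Rpower_mult; replace (1 / a * a) with 1 by (field; lra); apply Rpower_1, He).
    apply Rlt_Rpower_l; [exact Ha| lra].
  - apply continuous_ext_loc with (fun y => Rpower y a); [| apply Rpower_continuous, Hx].
    apply locally_of_ball with x; [lra|]. intros y Hy. apply Rabs_def2 in Hy.
    rewrite rpow_pos by lra. reflexivity.
Qed.

Lemma derivable_rpow_pos f x l c : 0 < f x -> derivable_pt_lim f x l ->
  derivable_pt_lim (fun y => rpow (f y) c) x (c * Rpower (f x) (c - 1) * l).
Proof.
  intros Hpos H.
  destruct (continuous_epsdel f x (derivable_continuous _ _ _ H) (f x) Hpos) as [d [Hd0 Hd1]].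
  apply derivable_ext_loc with (fun y => Rpower (f y) c) d; [exact Hd0| |].
  { intros y Hy. specialize (Hd1 y Hy). apply Rabs_def2 in Hd1. rewrite rpow_pos by lra. reflexivity. }
  apply (derivable_pt_lim_comp f (fun z => Rpower z c)); [exact H|].
  apply derivable_pt_lim_power, Hpos.
Qed.

(* Chain rule for y |-> (f y)^c, c > 1, with f >= 0 near x; at a zero of f the
   derivative is 0 even though rpow is not differentiable at 0 from the left. *)
Lemma derivable_rpow f x l c del : 1 < c -> 0 < del ->
  (forall y, Rabs (y - x) < del -> 0 <= f y) ->
  derivable_pt_lim f x l ->
  derivable_pt_lim (fun y => rpow (f y) c) x (c * rpow (f x) (c - 1) * l).
Proof.
  intros Hc Hdel Hnn H.
  destruct (Rlt_dec 0 (f x)) as [Hp|Hz].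
  { rewrite rpow_pos by exact Hp. apply derivable_rpow_pos; assumption. }
  assert (Hf0 : f x = 0)
    by (pose proof (Hnn x ltac:(rewrite Rminus_eq_0, Rabs_R0; exact Hdel)); lra).
  apply derivable_ext_loc with (fun y => f y * rpow (f y) (c - 1)) del; [exact Hdel| |].
  { intros y Hy. symmetry. apply rpow_peel, Hnn, Hy. }
  replace (c * rpow (f x) (c - 1) * l) with (l * rpow (f x) (c - 1))
    by (rewrite Hf0, rpow_npos by lra; ring).
  apply (derivable_mult_vanishing f (fun y => rpow (f y) (c - 1))); [exact Hf0| exact H|].
  apply (continuous_comp f (fun y => rpow y (c - 1)));
    [apply (derivable_continuous _ _ _ H)| apply rpow_continuous; lra].
Qed.

Lemma near_openQ (P : R * R -> Prop) t r : 0 < t -> 0 < r ->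
  (forall q, 0 < fst q -> 0 < snd q -> P q) -> locally (t, r) P.
Proof.
  intros Ht Hr HP. apply locally2_of_ball with (Rmin t r); [apply Rmin_pos; assumption|].
  intros q H1 H2. apply Rabs_def2 in H1, H2. pose proof (Rmin_l t r). pose proof (Rmin_r t r).
  simpl in *. apply HP; lra.
Qed.

Lemma transfer_d1 (f g : R -> R -> R) t r l : 0 < t -> 0 < r ->
  (forall s y, 0 < s -> 0 < y -> f s y = g s y) ->
  derivable_pt_lim (fun s => g s r) t l -> is_derive (fun s => f s r) t l.
Proof.
  intros Ht Hr Hfg H. apply is_derive_Reals.
  apply derivable_ext_loc with (fun s => g s r) t; [exact Ht| |exact H].
  intros s Hs. apply Rabs_def2 in Hs. symmetry. apply Hfg; lra.
Qed.

Lemma transfer_d2 (f g : R -> R -> R) t r l : 0 < t -> 0 < r ->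
  (forall s y, 0 < s -> 0 < y -> f s y = g s y) ->
  derivable_pt_lim (g t) r l -> is_derive (fun y => f t y) r l.
Proof.
  intros Ht Hr Hfg H. apply is_derive_Reals. apply derivable_ext_loc with (g t) r; [exact Hr| |exact H].
  intros y Hy. apply Rabs_def2 in Hy. symmetry. apply Hfg; lra.
Qed.

Lemma C1_openQ_of (f D1 D2 : R -> R -> R) :
  (forall t r, 0 < t -> 0 < r -> is_derive (fun s => f s r) t (D1 t r)) ->
  (forall t r, 0 < t -> 0 < r -> is_derive (fun y => f t y) r (D2 t r)) ->
  (forall t r, 0 < t -> 0 < r -> continuous (fun q => D1 (fst q) (snd q)) (t, r)) ->
  (forall t r, 0 < t -> 0 < r -> continuous (fun q => D2 (fst q) (snd q)) (t, r)) ->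
  C1_openQ f.
Proof.
  intros H1 H2 C1 C2 [t r] [Ht Hr]. simpl in Ht, Hr |- *.
  split; [exists (D1 t r); apply H1; assumption|].
  split; [exists (D2 t r); apply H2; assumption|].
  split; [apply continuous_ext_loc with (fun q => D1 (fst q) (snd q)); [| apply C1; assumption]
         | apply continuous_ext_loc with (fun q => D2 (fst q) (snd q)); [| apply C2; assumption]];
    apply near_openQ; try assumption; intros q Hq1 Hq2; symmetry; apply is_derive_unique;
    [apply H1| apply H2]; assumption.
Qed.

Lemma continuous_within_of_diffquot (f : R -> R) (D : R -> Prop) x l :
  filterlim (fun y => (f y - f x) / (y - x))
            (within (fun y => D y /\ y <> x) (locally x)) (locally l) ->
  forall eps, 0 < eps -> exists del, 0 < del /\
    forall y, D y -> Rabs (y - x) < del -> Rabs (f y - f x) < eps.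
Proof.
  intros H eps He.
  destruct (within_limit_epsdel _ _ x _ H 1 Rlt_0_1) as [d1 [Hd1 H1]].
  set (K := Rabs l + 1). assert (HK : 0 < K) by (unfold K; pose proof (Rabs_pos l); lra).
  exists (Rmin d1 (eps / K)). split; [apply Rmin_pos; [exact Hd1| apply Rdiv_lt_0_compat; lra]|].
  intros y Hy Hyx.
  destruct (Req_dec y x) as [->|Hne]; [rewrite Rminus_eq_0, Rabs_R0; exact He|].
  specialize (H1 y (Rlt_le_trans _ _ _ Hyx (Rmin_l _ _)) (conj Hy Hne)).
  assert (Hyx2 : Rabs (y - x) < eps / K) by exact (Rlt_le_trans _ _ _ Hyx (Rmin_r _ _)).
  replace (f y - f x) with ((f y - f x) / (y - x) * (y - x)) by (field; lra).
  rewrite Rabs_mult.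
  assert (Rabs ((f y - f x) / (y - x)) <= K)
    by (unfold K; pose proof (Rabs_triang_inv ((f y - f x) / (y - x)) l); lra).
  apply Rle_lt_trans with (K * Rabs (y - x)); [apply Rmult_le_compat_r; [apply Rabs_pos| lra]|].
  apply Rlt_le_trans with (K * (eps / K)); [apply Rmult_lt_compat_l; lra| right; field; lra].
Qed.

(* The positive part Rmax 0, used to extend functions of x >= 0 (or t >= 0)
   to all of R. *)

Lemma Rmax0_lip x y : Rabs (Rmax 0 y - Rmax 0 x) <= Rabs (y - x).
Proof. unfold Rmax; repeat destruct Rle_dec; unfold Rabs; repeat destruct Rcase_abs; lra. Qed.

Lemma Rmax0_mono x y : x <= y -> Rmax 0 x <= Rmax 0 y.
Proof. unfold Rmax; repeat destruct Rle_dec; lra. Qed.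

Lemma Rmax0_cont x : continuous (fun y => Rmax 0 y) x.
Proof.
  apply continuous_of_epsdel. intros eps He. exists eps; split; [exact He|].
  intros y Hy. eapply Rle_lt_trans; [apply Rmax0_lip| exact Hy].
Qed.

Lemma Rmax0_deriv t : 0 < t -> derivable_pt_lim (fun s => Rmax 0 s) t 1.
Proof.
  intro Ht. apply derivable_ext_loc with (fun s => s) t; [exact Ht| |apply derivable_pt_lim_id].
  intros y Hy. apply Rabs_def2 in Hy. rewrite Rmax_right by lra. reflexivity.
Qed.

Section InitialDatum.

Variable alpha : R.
Variables u0 u0' : R -> R.
Hypothesis alpha_gt1 : 1 < alpha.
Hypothesis u0_deriv : forall x, 0 <= x ->
  filterlim (fun y => (u0 y - u0 x) / (y - x))
            (within (fun y => 0 <= y /\ y <> x) (locally x)) (locally (u0' x)).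
Hypothesis u0'_cont_within : forall x, 0 <= x ->
  filterlim u0' (within (fun y => 0 <= y) (locally x)) (locally (u0' x)).
Hypothesis u0_nonneg : forall x, 0 <= x -> 0 <= u0 x.
Hypothesis u0_mono : forall x y, 0 <= x -> x <= y -> u0 x <= u0 y.

Definition uext x := u0 (Rmax 0 x).
Definition mext x := RInt uext 0 x.

Lemma uext_cont x : continuous uext x.
Proof.
  apply continuous_of_epsdel. intros eps He.
  destruct (continuous_within_of_diffquot u0 (fun y => 0 <= y) (Rmax 0 x) _
              (u0_deriv _ (Rmax_l 0 x)) eps He) as [d [Hd0 H]].
  exists d; split; [exact Hd0|]. intros y Hy. unfold uext. apply H; [apply Rmax_l|].
  eapply Rle_lt_trans; [apply Rmax0_lip| exact Hy].
Qed.

Lemma uext_nonneg x : 0 <= uext x.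
Proof. apply u0_nonneg, Rmax_l. Qed.

Lemma uext_mono x y : x <= y -> uext x <= uext y.
Proof. intro H. apply u0_mono; [apply Rmax_l| apply Rmax0_mono; exact H]. Qed.

Lemma uext_eq x : 0 <= x -> uext x = u0 x.
Proof. intro H. unfold uext. rewrite Rmax_right; auto. Qed.

Lemma uext_deriv x : 0 < x -> derivable_pt_lim uext x (u0' x).
Proof.
  intros Hx eps He.
  destruct (within_limit_epsdel _ _ x _ (u0_deriv x (Rlt_le _ _ Hx)) eps He) as [d1 [Hd1 H1]].
  exists (mkposreal (Rmin d1 x) (Rmin_pos _ _ Hd1 Hx)). simpl. intros k Hk Hkd.
  assert (Hk1 : Rabs k < d1) by exact (Rlt_le_trans _ _ _ Hkd (Rmin_l _ _)).
  assert (Hk2 : Rabs k < x) by exact (Rlt_le_trans _ _ _ Hkd (Rmin_r _ _)).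
  apply Rabs_def2 in Hk2. unfold uext. rewrite !Rmax_right by lra.
  replace k with (x + k - x) at 2 by ring.
  apply H1; [replace (x + k - x) with k by ring; exact Hk1| split; [lra| intro; apply Hk; lra]].
Qed.

Lemma u0'_cont x : 0 < x -> continuous u0' x.
Proof.
  intro Hx. apply continuous_of_epsdel. intros eps He.
  destruct (within_limit_epsdel _ _ x _ (u0'_cont_within x (Rlt_le _ _ Hx)) eps He)
    as [d1 [Hd1 H1]].
  exists (Rmin d1 x); split; [apply Rmin_pos; lra|]. intros y Hy.
  assert (Hk2 : Rabs (y - x) < x) by exact (Rlt_le_trans _ _ _ Hy (Rmin_r _ _)).
  apply Rabs_def2 in Hk2. apply H1; [exact (Rlt_le_trans _ _ _ Hy (Rmin_l _ _))| lra].
Qed.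

Lemma mext_deriv x : derivable_pt_lim mext x (uext x).
Proof.
  apply is_derive_Reals. unfold mext.
  apply (@is_derive_RInt R_NormedModule uext (RInt uext 0) 0 x); [|apply uext_cont].
  exists (mkposreal 1 Rlt_0_1). intros b _. apply (@RInt_correct R_CompleteNormedModule).
  apply (@ex_RInt_continuous R_CompleteNormedModule). intros z _. apply uext_cont.
Qed.

Lemma mext_cont x : continuous mext x.
Proof. exact (derivable_continuous _ _ _ (mext_deriv x)). Qed.

Lemma mext_0 : mext 0 = 0.
Proof. unfold mext. rewrite RInt_point. reflexivity. Qed.

Lemma mext_incr x y : x <= y -> 0 <= mext y - mext x <= (y - x) * uext y.
Proof.
  intro H. destruct (Req_dec x y) as [->|Hne]; [rewrite Rminus_eq_0; lra|].
  destruct (MVT_cor2 mext uext x y ltac:(lra) (fun c _ => mext_deriv c)) as [c [Hc1 Hc2]].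
  rewrite Hc1. pose proof (uext_nonneg c). pose proof (uext_mono c y ltac:(lra)). split; nra.
Qed.

Lemma mext_nonneg x : 0 <= x -> 0 <= mext x.
Proof. intro H. pose proof (mext_incr 0 x H). rewrite mext_0 in H0. lra. Qed.

(* If u0 vanishes at x then it vanishes on [0, x], and so does m0. *)
Lemma mext_zero x : 0 <= x -> uext x <= 0 -> mext x = 0.
Proof. intros Hx H. pose proof (mext_incr 0 x Hx). rewrite mext_0 in H0. pose proof (uext_nonneg x). nra. Qed.

Lemma mass0_eq x : 0 <= x -> mass0 u0 x = mext x.
Proof.
  intro H. unfold mass0, mext. apply RInt_ext. intros z Hz.
  rewrite Rmin_left in Hz by exact H. rewrite uext_eq; [reflexivity| lra].
Qed.

Definition ua x := rpow (uext x) alpha.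
Definition ua1 x := rpow (uext x) (alpha - 1).
Definition ua' x := alpha * ua1 x * u0' x.

Lemma ua_deriv x : 0 < x -> derivable_pt_lim ua x (ua' x).
Proof.
  intro Hx. apply (derivable_rpow uext x (u0' x) alpha 1 alpha_gt1 Rlt_0_1);
    [intros; apply uext_nonneg| apply uext_deriv, Hx].
Qed.

Lemma ua_cont x : continuous ua x.
Proof. apply (continuous_comp uext (fun y => rpow y alpha)); [apply uext_cont| apply rpow_continuous; lra]. Qed.

Lemma ua1_cont x : continuous ua1 x.
Proof. apply (continuous_comp uext (fun y => rpow y (alpha - 1))); [apply uext_cont| apply rpow_continuous; lra]. Qed.

Lemma ua'_cont x : 0 < x -> continuous ua' x.
Proof.
  intro Hx. apply (continuous_mult (fun y => alpha * ua1 y) u0'); [|apply u0'_cont, Hx].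
  apply (continuous_mult (fun _ => alpha) ua1); [apply continuous_const| apply ua1_cont].
Qed.

Lemma ua_peel x : ua x = uext x * ua1 x.
Proof. apply rpow_peel, uext_nonneg. Qed.

(* Characteristic speed vel(x) = alpha m0(x) u0(x)^(alpha-1), so that
   P_t(x) = x + t vel(x); its derivative is
   dvel = alpha u0^alpha + alpha (alpha-1) velG with velG = m0 u0^(alpha-2) u0'
   (set to 0 where u0 vanishes). *)
Definition vel x := alpha * mext (Rmax 0 x) * ua1 x.
Definition velG x :=
  if Rle_dec (uext x) 0 then 0 else mext x * Rpower (uext x) (alpha - 2) * u0' x.
Definition dvel x := alpha * ua x + alpha * (alpha - 1) * velG x.

Lemma vel_cont x : continuous vel x.
Proof.
  apply (continuous_mult (fun y => alpha * mext (Rmax 0 y)) ua1); [|apply ua1_cont].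
  apply (continuous_mult (fun _ => alpha) (fun y => mext (Rmax 0 y))); [apply continuous_const|].
  apply (continuous_comp (fun y => Rmax 0 y) mext); [apply Rmax0_cont| apply mext_cont].
Qed.

Lemma vel_le0 x : x <= 0 -> vel x = 0.
Proof. intro H. unfold vel. rewrite Rmax_left, mext_0 by exact H. ring. Qed.

Lemma vel_nonneg x : 0 <= vel x.
Proof.
  unfold vel. apply Rmult_le_pos; [apply Rmult_le_pos; [lra| apply mext_nonneg, Rmax_l]| apply rpow_ge0].
Qed.

Lemma vel_mono y z : y <= z -> vel y <= vel z.
Proof.
  intro H. unfold vel.
  pose proof (mext_incr _ _ (Rmax0_mono y z H)).
  pose proof (rpow_mono _ _ (alpha - 1) ltac:(lra) (uext_mono y z H)).
  pose proof (mext_nonneg (Rmax 0 y) (Rmax_l 0 y)). pose proof (rpow_ge0 (uext y) (alpha - 1)).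
  apply Rmult_le_compat; [nra| apply rpow_ge0| nra| unfold ua1; lra].
Qed.

Lemma vel_deriv x : 0 < x -> derivable_pt_lim vel x (dvel x).
Proof.
  intro Hx.
  apply derivable_ext_loc with (fun y => (alpha * mext y) * ua1 y) x; [exact Hx| |].
  { intros y Hy. apply Rabs_def2 in Hy. unfold vel. rewrite Rmax_right by lra. reflexivity. }
  assert (Hm : derivable_pt_lim (fun y => alpha * mext y) x (alpha * uext x)).
  { replace (alpha * uext x) with (0 * mext x + alpha * uext x) by ring.
    apply (derivable_pt_lim_mult (fun _ => alpha) mext);
      [apply derivable_pt_lim_const| apply mext_deriv]. }
  destruct (Rle_dec (uext x) 0) as [Hz|Hp].
  - (* u0 = m0 = 0 at x: only continuity of u0^(alpha-1) is needed *)
    assert (Hu : uext x = 0) by (pose proof (uext_nonneg x); lra).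
    replace (dvel x) with (alpha * uext x * ua1 x).
    + apply (derivable_mult_vanishing (fun y => alpha * mext y) ua1); [| exact Hm| apply ua1_cont].
      rewrite mext_zero by lra. ring.
    + unfold dvel, velG, ua. destruct (Rle_dec (uext x) 0); [|lra].
      rewrite Hu, rpow_npos by lra. ring.
  - replace (dvel x) with (alpha * uext x * ua1 x + alpha * mext x * ((alpha - 1) * Rpower (uext x) (alpha - 1 - 1) * u0' x)).
    + apply (derivable_pt_lim_mult (fun y => alpha * mext y) ua1); [exact Hm|].
      apply derivable_rpow_pos; [lra| apply uext_deriv, Hx].
    + unfold dvel, velG. destruct (Rle_dec (uext x) 0); [lra|].
      rewrite ua_peel. replace (alpha - 1 - 1) with (alpha - 2) by ring. ring.
Qed.

Lemma dvel_nonneg x : 0 < x -> 0 <= dvel x.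
Proof. intro Hx. exact (derivative_nonneg_of_mono vel x _ vel_mono (vel_deriv x Hx)). Qed.

(* Where u0 vanishes at x, m0 u0^(alpha-2) <= (y - x) u0^(alpha-1) for y > x,
   which makes velG continuous at x. *)
Lemma velG_bound x y : 0 <= x -> uext x <= 0 ->
  Rabs (velG y) <= Rabs (y - x) * (ua1 y * Rabs (u0' y)).
Proof.
  intros Hx Hz. pose proof (Rabs_pos (y - x)). pose proof (rpow_ge0 (uext y) (alpha - 1)).
  pose proof (Rabs_pos (u0' y)).
  unfold velG. destruct (Rle_dec (uext y) 0) as [Hyz|Hyp].
  { rewrite Rabs_R0. unfold ua1. apply Rmult_le_pos; [lra| nra]. }
  assert (Hyx : x < y)
    by (destruct (Rlt_dec x y); [assumption| pose proof (uext_mono y x ltac:(lra)); lra]).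
  assert (Hm : 0 <= mext y <= (y - x) * uext y).
  { pose proof (mext_incr x y ltac:(lra)). rewrite (mext_zero x) in H2 by lra. lra. }
  assert (Hpw : uext y * Rpower (uext y) (alpha - 2) = ua1 y).
  { unfold ua1. rewrite rpow_pos by lra. replace (alpha - 1) with (1 + (alpha - 2)) by ring.
    rewrite Rpower_plus, Rpower_1 by lra. reflexivity. }
  pose proof (Rpower_pos (uext y) (alpha - 2)).
  rewrite !Rabs_mult, (Rabs_right (mext y)), (Rabs_right (Rpower _ _)), (Rabs_right (y - x)) by lra.
  rewrite <- Rmult_assoc. apply Rmult_le_compat_r; [lra|].
  rewrite <- Hpw. apply Rle_trans with ((y - x) * uext y * Rpower (uext y) (alpha - 2)); [nra| right; ring].
Qed.

Lemma velG_cont x : 0 < x -> continuous velG x.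
Proof.
  intro Hx. destruct (Rle_dec (uext x) 0) as [Hz|Hp].
  - apply (continuous_squeeze velG (fun y => Rabs (y - x) * (ua1 y * Rabs (u0' y))) x x Hx).
    + unfold velG. destruct (Rle_dec (uext x) 0); [reflexivity| lra].
    + rewrite Rminus_eq_0, Rabs_R0. ring.
    + apply (continuous_mult (fun y => Rabs (y - x)) (fun y => ua1 y * Rabs (u0' y)));
        [| apply (continuous_mult ua1 (fun y => Rabs (u0' y))); [apply ua1_cont|]].
      * apply (continuous_comp (fun y => y - x) Rabs); [| apply continuous_Rabs].
        apply (continuous_minus (fun y => y) (fun _ => x)); [apply continuous_id| apply continuous_const].
      * apply (continuous_comp u0' Rabs); [apply u0'_cont, Hx| apply continuous_Rabs].
    + intros y _. apply velG_bound; lra.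
  - destruct (continuous_epsdel uext x (uext_cont x) (uext x) ltac:(lra)) as [d [Hd0 Hd1]].
    apply continuous_ext_loc with (fun y => mext y * Rpower (uext y) (alpha - 2) * u0' y).
    + apply locally_of_ball with d; [exact Hd0|]. intros y Hy.
      specialize (Hd1 y Hy). apply Rabs_def2 in Hd1.
      unfold velG. destruct (Rle_dec (uext y) 0); [lra| reflexivity].
    + apply (continuous_mult (fun y => mext y * Rpower (uext y) (alpha - 2)) u0');
        [apply (continuous_mult mext (fun y => Rpower (uext y) (alpha - 2)))|].
      * apply mext_cont.
      * apply (continuous_comp uext (fun z => Rpower z (alpha - 2)));
          [apply uext_cont| apply Rpower_continuous; lra].
      * apply u0'_cont, Hx.
Qed.

Lemma dvel_cont x : 0 < x -> continuous dvel x.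
Proof.
  intro Hx. apply (continuous_plus (fun y => alpha * ua y) (fun y => alpha * (alpha - 1) * velG y)).
  - apply (continuous_mult (fun _ => alpha) ua); [apply continuous_const| apply ua_cont].
  - apply (continuous_mult (fun _ => alpha * (alpha - 1)) velG);
      [apply continuous_const| apply velG_cont, Hx].
Qed.

(* Characteristics: Pchar t x = x + t vel(x) (with t replaced by Rmax 0 t so
   that Pchar is defined for all t), and its inverse Qchar t in the space
   variable, chosen by Hilbert's epsilon. *)
Definition Pchar t x := x + vel x * Rmax 0 t.
Definition Qchar t r := epsilon (inhabits 0) (fun x => Pchar t x = r).
Definition Jac t x := 1 + t * dvel x.

Lemma Pchar_cont t x : continuous (Pchar t) x.
Proof.
  apply (continuous_plus (fun y => y) (fun y => vel y * Rmax 0 t)); [apply continuous_id|].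
  apply (continuous_mult vel (fun _ => Rmax 0 t)); [apply vel_cont| apply continuous_const].
Qed.

Lemma Pchar_expand t x y : x <= y -> y - x <= Pchar t y - Pchar t x.
Proof. intro H. unfold Pchar. pose proof (vel_mono x y H). pose proof (Rmax_l 0 t). nra. Qed.

Lemma Pchar_dist t x y : Rabs (y - x) <= Rabs (Pchar t y - Pchar t x).
Proof.
  destruct (Rle_dec x y) as [H|H].
  - pose proof (Pchar_expand t x y H). rewrite !Rabs_right by lra. lra.
  - pose proof (Pchar_expand t y x ltac:(lra)). rewrite !Rabs_left1 by lra. lra.
Qed.

Lemma Pchar_surj t r : exists x, Pchar t x = r.
Proof.
  destruct (Rle_dec r 0) as [Hr|Hr].
  - exists r. unfold Pchar. rewrite vel_le0 by exact Hr. ring.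
  - assert (P0 : Pchar t 0 = 0) by (unfold Pchar; rewrite vel_le0 by lra; ring).
    assert (Pr : r <= Pchar t r) by (unfold Pchar; pose proof (vel_nonneg r); pose proof (Rmax_l 0 t); nra).
    destruct (IVT_gen_consistent (Pchar t) 0 r r (Pchar_cont t)) as [x [_ Hx]];
      [rewrite P0, Rmin_left, Rmax_right; lra| exists x; exact Hx].
Qed.

Lemma Qchar_spec t r : Pchar t (Qchar t r) = r.
Proof. unfold Qchar. apply (epsilon_spec (inhabits 0) (fun x => Pchar t x = r)), Pchar_surj. Qed.

Lemma Qchar_unique t r x : Pchar t x = r -> x = Qchar t r.
Proof.
  intro H. pose proof (Pchar_dist t x (Qchar t r)). rewrite Qchar_spec, H, Rminus_eq_0, Rabs_R0 in H0.
  pose proof (Rabs_pos (Qchar t r - x)). assert (Rabs (Qchar t r - x) = 0) by lra.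
  apply Rabs_eq_0 in H2. lra.
Qed.

Lemma Qchar_nonneg t r : 0 <= r -> 0 <= Qchar t r.
Proof.
  intro Hr. destruct (Rle_dec 0 (Qchar t r)) as [|Hn]; [assumption|].
  pose proof (Qchar_spec t r). unfold Pchar in H. rewrite vel_le0 in H by lra. lra.
Qed.

Lemma Qchar_pos t r : 0 < r -> 0 < Qchar t r.
Proof.
  intro Hr. destruct (Rlt_dec 0 (Qchar t r)) as [|Hn]; [assumption|].
  pose proof (Qchar_spec t r). unfold Pchar in H. rewrite vel_le0 in H by lra. lra.
Qed.

Lemma Qchar_0 t : Qchar t 0 = 0.
Proof. symmetry. apply Qchar_unique. unfold Pchar. rewrite vel_le0 by lra. ring. Qed.

Lemma Qchar_t0 r : Qchar 0 r = r.
Proof. symmetry. apply Qchar_unique. unfold Pchar. rewrite Rmax_left by lra. ring. Qed.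

Lemma Qchar_lip_r t r r' : Rabs (Qchar t r' - Qchar t r) <= Rabs (r' - r).
Proof. eapply Rle_trans; [apply (Pchar_dist t)|]. rewrite !Qchar_spec. lra. Qed.

Lemma Qchar_lip_t s t r : Rabs (Qchar s r - Qchar t r) <= vel (Qchar t r) * Rabs (s - t).
Proof.
  eapply Rle_trans; [apply (Pchar_dist s)|]. rewrite Qchar_spec.
  pose proof (Qchar_spec t r) as E. unfold Pchar in E |- *.
  set (x := Qchar t r) in *.
  replace (r - (x + vel x * Rmax 0 s)) with (vel x * (Rmax 0 t - Rmax 0 s)) by lra.
  rewrite Rabs_mult, Rabs_right by (apply Rle_ge, vel_nonneg).
  apply Rmult_le_compat_l; [apply vel_nonneg|].
  rewrite Rabs_minus_sym. apply Rmax0_lip.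
Qed.

Lemma Qchar_cont2 p : continuous (fun z => Qchar (fst z) (snd z)) p.
Proof.
  apply continuous2_of_epsdel. intros eps He. destruct p as [t r]. simpl.
  set (A := vel (Qchar t r)). assert (HA : 0 <= A) by apply vel_nonneg.
  exists (Rmin (eps / 2) (eps / (2 * (A + 1)))). split; [apply Rmin_pos; apply Rdiv_lt_0_compat; lra|].
  intros [s r'] Hs Hr. simpl in Hs, Hr |- *.
  assert (Hr1 : Rabs (r' - r) < eps / 2) by exact (Rlt_le_trans _ _ _ Hr (Rmin_l _ _)).
  assert (Hs1 : Rabs (s - t) < eps / (2 * (A + 1))) by exact (Rlt_le_trans _ _ _ Hs (Rmin_r _ _)).
  replace (Qchar s r' - Qchar t r) with ((Qchar s r' - Qchar s r) + (Qchar s r - Qchar t r)) by ring.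
  eapply Rle_lt_trans; [apply Rabs_triang|].
  pose proof (Qchar_lip_r s r r'). pose proof (Qchar_lip_t s t r). fold A in H0.
  assert (A * Rabs (s - t) <= eps / 2).
  { apply Rle_trans with ((A + 1) * (eps / (2 * (A + 1)))); [pose proof (Rabs_pos (s - t)); nra|].
    right; field; lra. }
  lra.
Qed.

Lemma Pchar_deriv t x : 0 <= t -> 0 < x -> derivable_pt_lim (Pchar t) x (Jac t x).
Proof.
  intros Ht Hx. unfold Jac. rewrite <- (Rmax_right 0 t) at 2 by exact Ht.
  replace (1 + Rmax 0 t * dvel x) with (1 + (dvel x * Rmax 0 t + vel x * 0)) by ring.
  apply (derivable_pt_lim_plus (fun y => y) (fun y => vel y * Rmax 0 t)); [apply derivable_pt_lim_id|].
  apply (derivable_pt_lim_mult vel (fun _ => Rmax 0 t)); [apply vel_deriv, Hx| apply derivable_pt_lim_const].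
Qed.

Lemma Pchar_diff t x : 0 < t -> 0 < x -> differentiable_pt_lim Pchar t x (vel x) (Jac t x).
Proof.
  intros Ht Hx.
  pose proof (differentiable_pt_lim_comp (fun a b => a * b) (fun u v => vel v) (fun u v => Rmax 0 u)
    t x _ _ _ _ _ _ (DF_mult (vel x) (Rmax 0 t))
    (DF_snd vel t x _ (vel_deriv x Hx))
    (differentiable_pt_lim_proj1_0 _ t x _ (Rmax0_deriv t Ht))) as Hprod.
  pose proof (DF_sub (fun u v => v) (fun u v => 0 - vel v * Rmax 0 u) t x _ _ _ _
    (DF_snd (fun v => v) t x 1 (derivable_pt_lim_id x))
    (DF_sub (fun u v => 0) _ t x 0 0 _ _
       (differentiable_pt_lim_proj1_0 _ t x _ (derivable_pt_lim_const 0 t)) Hprod)) as K.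
  eapply differentiable_pt_lim_ext; [| eapply DF_val; [exact K| ring|]].
  - apply locally_2d_forall. intros u v. unfold Pchar. ring.
  - unfold Jac. rewrite Rmax_right by lra. ring.
Qed.

(* Derivatives of the inverse characteristic map, by implicit differentiation
   of Pchar t (Qchar t r) = r. *)
Lemma Qchar_dr t r : 0 < t -> 0 < r -> derivable_pt_lim (Qchar t) r (/ Jac t (Qchar t r)).
Proof.
  intros Ht Hr. set (x := Qchar t r).
  assert (HJ : 1 <= Jac t x) by (unfold Jac; pose proof (dvel_nonneg x (Qchar_pos t r Hr)); nra).
  replace (/ Jac t x) with (- (0 - 1) / (Jac t x - 0)) by (field; lra).
  apply (implicit_derivative (fun a y => Pchar t y - a) (Qchar t) r _ _ 1 1 Rlt_0_1); [lra| | |].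
  - apply DF_sub; [apply DF_snd, Pchar_deriv; [lra| apply Qchar_pos, Hr]|].
    apply differentiable_pt_lim_proj1_0, derivable_pt_lim_id.
  - intros s _. rewrite !Qchar_spec. ring.
  - intros s _. rewrite Rmult_1_l. apply Qchar_lip_r.
Qed.

Lemma Qchar_dt t r : 0 < t -> 0 < r ->
  derivable_pt_lim (fun s => Qchar s r) t (- vel (Qchar t r) / Jac t (Qchar t r)).
Proof.
  intros Ht Hr. set (x := Qchar t r).
  assert (HJ : 1 <= Jac t x) by (unfold Jac; pose proof (dvel_nonneg x (Qchar_pos t r Hr)); nra).
  apply (implicit_derivative Pchar (fun s => Qchar s r) t _ _ (vel x) 1 Rlt_0_1); [lra| | |].
  - apply Pchar_diff; [exact Ht| apply Qchar_pos, Hr].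
  - intros s _. rewrite !Qchar_spec. reflexivity.
  - intros s _. apply Qchar_lip_t.
Qed.

(* Along the characteristic from x,
   u^(-alpha) grows linearly: u = u0(x) dil^(-1/alpha) with
   dil = 1 + alpha t u0(x)^alpha, and the mass is m = m0(x) dil^((alpha-1)/alpha). *)
Definition dil t x := 1 + alpha * Rmax 0 t * ua x.
Definition expU := - (1 / alpha).
Definition expM := (alpha - 1) / alpha.
Definition Uc t x := uext x * Rpower (dil t x) expU.
Definition Mc t x := mext x * Rpower (dil t x) expM.

Definition dtU t x := uext x * (expU * Rpower (dil t x) (expU - 1) * (alpha * ua x)).
Definition dxU t x := Rpower (dil t x) expU * u0' x
  + uext x * (expU * Rpower (dil t x) (expU - 1) * (alpha * Rmax 0 t * ua' x)).
Definition dtM t x := mext x * (expM * Rpower (dil t x) (expM - 1) * (alpha * ua x)).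
Definition dxM t x := Rpower (dil t x) expM * uext x
  + mext x * (expM * Rpower (dil t x) (expM - 1) * (alpha * Rmax 0 t * ua' x)).

Lemma dil_ge1 t x : 1 <= dil t x.
Proof.
  unfold dil. pose proof (Rmax_l 0 t). pose proof (rpow_ge0 (uext x) alpha).
  assert (0 <= alpha * Rmax 0 t * ua x) by (unfold ua; apply Rmult_le_pos; [apply Rmult_le_pos|]; lra).
  lra.
Qed.

Lemma dil_pos t x : 0 < dil t x.
Proof. pose proof (dil_ge1 t x). lra. Qed.

Lemma dil_t0 x : dil 0 x = 1.
Proof. unfold dil. rewrite Rmax_left by lra. ring. Qed.

Lemma expM_split t x : Rpower (dil t x) expM = dil t x * Rpower (dil t x) expU.
Proof.
  replace expM with (1 + expU) by (unfold expM, expU; field; lra).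
  rewrite Rpower_plus, Rpower_1 by apply dil_pos. reflexivity.
Qed.

Lemma expM_pred t x : Rpower (dil t x) (expM - 1) = Rpower (dil t x) expU.
Proof. f_equal. unfold expM, expU. field. lra. Qed.

Lemma velG_peel x : mext x * ua1 x * u0' x = uext x * velG x.
Proof.
  unfold velG, ua1. destruct (Rle_dec (uext x) 0) as [Hz|Hp].
  - rewrite rpow_npos by exact Hz. pose proof (uext_nonneg x). replace (uext x) with 0 by lra. ring.
  - rewrite rpow_pos by lra. replace (alpha - 1) with (1 + (alpha - 2)) by ring.
    rewrite Rpower_plus, Rpower_1 by lra. ring.
Qed.

Lemma dxM_eq t x : 0 <= t -> dxM t x = Uc t x * Jac t x.
Proof.
  intro Ht.
  assert (E : dxM t x - Uc t x * Jac t x =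
     (alpha - 1) * alpha * t * Rpower (dil t x) expU * (mext x * ua1 x * u0' x - uext x * velG x)).
  { unfold dxM, Uc, Jac, dvel, ua'. rewrite expM_split, expM_pred, ua_peel. unfold dil.
    rewrite ua_peel, Rmax_right by exact Ht. unfold expM. field. lra. }
  rewrite velG_peel in E. lra.
Qed.

Lemma rpow_Uc t x : rpow (Uc t x) alpha = ua x * / dil t x.
Proof.
  unfold Uc, ua. destruct (Rle_dec (uext x) 0) as [Hz|Hp].
  - pose proof (uext_nonneg x). replace (uext x) with 0 by lra. rewrite Rmult_0_l, rpow_npos by lra. ring.
  - rewrite !rpow_pos; [| lra| apply Rmult_lt_0_compat; [lra| apply Rpower_pos]].
    rewrite <- Rpower_mult_distr by (try lra; apply Rpower_pos).
    rewrite Rpower_mult. replace (expU * alpha) with (Ropp 1) by (unfold expU; field; lra).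
    rewrite Rpower_Ropp, Rpower_1 by apply dil_pos. reflexivity.
Qed.

(* The mass equation along characteristics:
   dM/dt - dM/dx * vel / Jac + M * U^alpha = 0. *)
Lemma transport_identity t x : 0 <= t -> 0 <= x -> Jac t x <> 0 ->
  dtM t x + dxM t x * (- vel x / Jac t x) + Mc t x * rpow (Uc t x) alpha = 0.
Proof.
  intros Ht Hx HJ. rewrite dxM_eq, rpow_Uc by exact Ht.
  replace (Uc t x * Jac t x * (- vel x / Jac t x)) with (- Uc t x * vel x) by (field; exact HJ).
  unfold dtM, Mc, Uc, vel. rewrite expM_split, expM_pred, Rmax_right by exact Hx.
  rewrite ua_peel. unfold expM. field. split; [apply Rgt_not_eq, dil_pos| lra].
Qed.

Lemma DF_dil t x : 0 < t -> 0 < x ->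
  differentiable_pt_lim dil t x (alpha * ua x) (alpha * Rmax 0 t * ua' x).
Proof.
  intros Ht Hx.
  pose proof (differentiable_pt_lim_comp (fun a b => 1 + alpha * a * b)
    (fun u v => Rmax 0 u) (fun u v => ua v) t x _ _ _ _ _ _ (DF_bilin 1 alpha (Rmax 0 t) (ua x))
    (differentiable_pt_lim_proj1_0 _ t x 1 (Rmax0_deriv t Ht)) (DF_snd ua t x _ (ua_deriv x Hx))) as K.
  eapply DF_val; [exact K| ring| ring].
Qed.

Lemma DF_dil_pow c t x : 0 < t -> 0 < x ->
  differentiable_pt_lim (fun u v => Rpower (dil u v) c) t x
    (c * Rpower (dil t x) (c - 1) * (alpha * ua x))
    (c * Rpower (dil t x) (c - 1) * (alpha * Rmax 0 t * ua' x)).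
Proof.
  intros Ht Hx.
  pose proof (differentiable_pt_lim_comp (fun a b => Rpower a c) dil dil t x _ 0 _ _ _ _
    (differentiable_pt_lim_proj1_0 (fun a => Rpower a c) (dil t x) (dil t x) _
       (derivable_pt_lim_power (dil t x) c (dil_pos t x)))
    (DF_dil t x Ht Hx) (DF_dil t x Ht Hx)) as K.
  eapply DF_val; [exact K| ring| ring].
Qed.

Lemma DF_Uc t x : 0 < t -> 0 < x -> differentiable_pt_lim Uc t x (dtU t x) (dxU t x).
Proof.
  intros Ht Hx.
  pose proof (differentiable_pt_lim_comp (fun a b => a * b) (fun u v => uext v)
    (fun u v => Rpower (dil u v) expU) t x _ _ _ _ _ _ (DF_mult (uext x) (Rpower (dil t x) expU))
    (DF_snd uext t x _ (uext_deriv x Hx)) (DF_dil_pow expU t x Ht Hx)) as K.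
  eapply DF_val; [exact K| unfold dtU; ring| unfold dxU; ring].
Qed.

Lemma DF_Mc t x : 0 < t -> 0 < x -> differentiable_pt_lim Mc t x (dtM t x) (dxM t x).
Proof.
  intros Ht Hx.
  pose proof (differentiable_pt_lim_comp (fun a b => a * b) (fun u v => mext v)
    (fun u v => Rpower (dil u v) expM) t x _ _ _ _ _ _ (DF_mult (mext x) (Rpower (dil t x) expM))
    (DF_snd mext t x _ (mext_deriv x)) (DF_dil_pow expM t x Ht Hx)) as K.
  eapply DF_val; [exact K| unfold dtM; ring| unfold dxM; ring].
Qed.

Definition usol_c t r := Uc t (Qchar t r).
Definition msol_c t r := Mc t (Qchar t r).

(* Partial derivatives of usol_c, as functions of t and x = Q(t, r). *)
Definition dtu t x := dtU t x + dxU t x * (- vel x / Jac t x).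
Definition dru t x := dxU t x * / Jac t x.

Lemma Jac_ge1 t x : 0 <= t -> 0 < x -> 1 <= Jac t x.
Proof. intros Ht Hx. unfold Jac. pose proof (dvel_nonneg x Hx). nra. Qed.

Lemma usol_c_dt t r : 0 < t -> 0 < r -> derivable_pt_lim (fun s => usol_c s r) t (dtu t (Qchar t r)).
Proof.
  intros Ht Hr. unfold dtu. rewrite <- (Rmult_1_r (dtU _ _)).
  apply (derivable_pt_lim_comp_2d Uc (fun s => s) (fun s => Qchar s r) t);
    [apply DF_Uc; [exact Ht| apply Qchar_pos, Hr]| apply derivable_pt_lim_id| apply Qchar_dt; assumption].
Qed.

Lemma usol_c_dr t r : 0 < t -> 0 < r -> derivable_pt_lim (usol_c t) r (dru t (Qchar t r)).
Proof.
  intros Ht Hr. unfold dru. replace (dxU t (Qchar t r) * / Jac t (Qchar t r))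
    with (dtU t (Qchar t r) * 0 + dxU t (Qchar t r) * / Jac t (Qchar t r)) by ring.
  apply (derivable_pt_lim_comp_2d Uc (fun _ => t) (Qchar t) r);
    [apply DF_Uc; [exact Ht| apply Qchar_pos, Hr]| apply derivable_pt_lim_const| apply Qchar_dr; assumption].
Qed.

Lemma msol_c_dt t r : 0 < t -> 0 < r ->
  derivable_pt_lim (fun s => msol_c s r) t (- (msol_c t r * rpow (usol_c t r) alpha)).
Proof.
  intros Ht Hr. set (x := Qchar t r). assert (Hx : 0 < x) by apply Qchar_pos, Hr.
  pose proof (transport_identity t x ltac:(lra) ltac:(lra) ltac:(pose proof (Jac_ge1 t x ltac:(lra) Hx); lra)).
  replace (- (msol_c t r * rpow (usol_c t r) alpha))
    with (dtM t x * 1 + dxM t x * (- vel x / Jac t x)) by (unfold msol_c, usol_c; fold x; lra).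
  apply (derivable_pt_lim_comp_2d Mc (fun s => s) (fun s => Qchar s r) t);
    [apply DF_Mc; [exact Ht| exact Hx]| apply derivable_pt_lim_id| apply Qchar_dt; assumption].
Qed.

Lemma msol_c_dr t r : 0 < t -> 0 < r -> derivable_pt_lim (msol_c t) r (usol_c t r).
Proof.
  intros Ht Hr. set (x := Qchar t r). assert (Hx : 0 < x) by apply Qchar_pos, Hr.
  pose proof (Jac_ge1 t x ltac:(lra) Hx).
  replace (usol_c t r) with (dtM t x * 0 + dxM t x * / Jac t x)
    by (unfold usol_c; fold x; rewrite dxM_eq by lra; field; lra).
  apply (derivable_pt_lim_comp_2d Mc (fun _ => t) (Qchar t) r);
    [apply DF_Mc; [exact Ht| exact Hx]| apply derivable_pt_lim_const| apply Qchar_dr; assumption].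
Qed.

Lemma dil_pow_cont2 c p : continuous (fun z => Rpower (dil (fst z) (snd z)) c) p.
Proof.
  apply (continuous_comp (fun z => dil (fst z) (snd z)) (fun y => Rpower y c));
    [| apply Rpower_continuous, dil_pos].
  unfold dil. continuity2; [apply Rmax0_cont| apply ua_cont].
Qed.

Lemma usol_c_cont2 p : continuous (fun z => usol_c (fst z) (snd z)) p.
Proof.
  apply (continuous_comp_2 (fun z => fst z) (fun z => Qchar (fst z) (snd z)) Uc p);
    [apply continuous_fst'| apply Qchar_cont2|].
  unfold Uc. continuity2; [apply uext_cont| apply dil_pow_cont2].
Qed.

Lemma msol_c_cont2 p : continuous (fun z => msol_c (fst z) (snd z)) p.
Proof.
  apply (continuous_comp_2 (fun z => fst z) (fun z => Qchar (fst z) (snd z)) Mc p);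
    [apply continuous_fst'| apply Qchar_cont2|].
  unfold Mc. continuity2; [apply mext_cont| apply dil_pow_cont2].
Qed.

Lemma dxU_cont2 t x : 0 < x -> continuous (fun z => dxU (fst z) (snd z)) (t, x).
Proof.
  intro Hx. unfold dxU. continuity2; try apply dil_pow_cont2;
    [apply u0'_cont, Hx| apply uext_cont| apply Rmax0_cont| apply ua'_cont, Hx].
Qed.

Lemma Jac_inv_cont2 t x : 0 <= t -> 0 < x -> continuous (fun z => / Jac (fst z) (snd z)) (t, x).
Proof.
  intros Ht Hx. apply continuous_inv2; [unfold Jac; continuity2; apply dvel_cont, Hx|].
  simpl. pose proof (Jac_ge1 t x Ht Hx). lra.
Qed.

Lemma dtu_cont2 t x : 0 < t -> 0 < x -> continuous (fun z => dtu (fst z) (snd z)) (t, x).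
Proof.
  intros Ht Hx. unfold dtu, Rdiv.
  apply (continuous_plus (fun z => dtU (fst z) (snd z))); [unfold dtU; continuity2;
    try apply dil_pow_cont2; [apply uext_cont| apply ua_cont]|].
  apply (continuous_mult (fun z => dxU (fst z) (snd z))); [apply dxU_cont2, Hx|].
  apply (continuous_mult (fun z => - vel (snd z))); [continuity2; apply vel_cont|].
  apply Jac_inv_cont2; lra.
Qed.

Lemma dru_cont2 t x : 0 < t -> 0 < x -> continuous (fun z => dru (fst z) (snd z)) (t, x).
Proof.
  intros Ht Hx. unfold dru.
  apply (continuous_mult (fun z => dxU (fst z) (snd z))); [apply dxU_cont2, Hx|].
  apply Jac_inv_cont2; lra.
Qed.

Lemma RInt_usol_c t r : 0 < t -> 0 <= r -> RInt (usol_c t) 0 r = msol_c t r.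
Proof.
  intros Ht Hr.
  assert (Hm0 : msol_c t 0 = 0) by (unfold msol_c, Mc; rewrite Qchar_0, mext_0; ring).
  rewrite (RInt_primitive_right (msol_c t) (usol_c t) 0 r Hr), Hm0.
  - apply Rminus_0_r.
  - intros y Hy. apply msol_c_dr; assumption.
  - intros y. exact (continuous2_snd_slice (fun z => usol_c (fst z) (snd z)) t y (usol_c_cont2 (t, y))).
  - exact (continuous2_snd_slice (fun z => msol_c (fst z) (snd z)) t 0 (msol_c_cont2 (t, 0))).
Qed.

Lemma Pmap_eq t x : 0 <= t -> 0 <= x -> Pmap alpha u0 t x = Pchar t x.
Proof.
  intros Ht Hx. unfold Pmap, Pchar, vel, ua1.
  rewrite mass0_eq, (Rmax_right 0 x), uext_eq, (Rmax_right 0 t) by assumption. ring.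
Qed.

Lemma Pmap_bijective t : 0 <= t ->
     (forall rho0, 0 <= rho0 -> 0 <= Pmap alpha u0 t rho0) /\
     (forall rho, 0 <= rho -> exists! rho0, 0 <= rho0 /\ Pmap alpha u0 t rho0 = rho) /\
     (forall rho0, 0 < rho0 -> ex_derive (Pmap alpha u0 t) rho0 /\
                               1 <= Derive (Pmap alpha u0 t) rho0).
Proof.
  intro Ht. split; [| split].
  - intros x Hx. rewrite Pmap_eq by assumption. unfold Pchar.
    pose proof (vel_nonneg x). pose proof (Rmax_l 0 t). nra.
  - intros r Hr. exists (Qchar t r). split.
    + split; [apply Qchar_nonneg, Hr|]. rewrite Pmap_eq by (try apply Qchar_nonneg; assumption).
      apply Qchar_spec.
    + intros y [Hy E]. rewrite Pmap_eq in E by assumption. symmetry. apply Qchar_unique, E.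
  - intros x Hx.
    assert (K : is_derive (Pmap alpha u0 t) x (Jac t x)).
    { apply is_derive_Reals. apply derivable_ext_loc with (Pchar t) x; [exact Hx| |apply Pchar_deriv; lra].
      intros y Hy. apply Rabs_def2 in Hy. symmetry. apply Pmap_eq; lra. }
    split; [exists (Jac t x); exact K|].
    rewrite (is_derive_unique _ _ _ K). apply Jac_ge1; lra.
Qed.

Lemma usol_formula a t : 0 <= a -> 0 <= t ->
  (if Req_EM_T a 0 then 0 else Rpower (Rpower a (- alpha) + alpha * t) (- (1 / alpha)))
  = a * Rpower (1 + alpha * t * rpow a alpha) expU.
Proof.
  intros Ha0 Ht. destruct (Req_EM_T a 0) as [->|Hne]; [ring|].
  assert (Hap : 0 < a) by lra. rewrite rpow_pos by exact Hap.
  pose proof (Rpower_pos a alpha).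
  assert (E : Rpower a (- alpha) + alpha * t = Rpower a (- alpha) * (1 + alpha * t * Rpower a alpha)).
  { rewrite Rmult_plus_distr_l, Rmult_1_r.
    replace (Rpower a (- alpha) * (alpha * t * Rpower a alpha))
      with (alpha * t * (Rpower a (- alpha) * Rpower a alpha)) by ring.
    rewrite <- Rpower_plus. replace (- alpha + alpha) with 0 by ring. rewrite Rpower_O by exact Hap. ring. }
  assert (0 <= alpha * t) by nra.
  rewrite E, <- Rpower_mult_distr; [| apply Rpower_pos| nra].
  rewrite Rpower_mult. replace (- alpha * - (1 / alpha)) with 1 by (field; lra).
  rewrite Rpower_1 by exact Hap. reflexivity.
Qed.

Section AnyInverse.

Variable Pinv : R -> R -> R.
Hypothesis Pinv_inverse : forall t rho, 0 <= t -> 0 <= rho ->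
  0 <= Pinv t rho /\ Pmap alpha u0 t (Pinv t rho) = rho.

Lemma usol_eq t r : 0 <= t -> 0 <= r -> usol alpha u0 Pinv t r = usol_c t r.
Proof.
  intros Ht Hr. destruct (Pinv_inverse t r Ht Hr) as [Hx E].
  rewrite Pmap_eq in E by assumption. apply Qchar_unique in E.
  unfold usol, usol_c, Uc. rewrite E, <- uext_eq by (rewrite <- E; exact Hx).
  rewrite usol_formula by (try exact Ht; apply uext_nonneg).
  unfold dil, ua. rewrite (Rmax_right 0 t) by exact Ht. reflexivity.
Qed.

Lemma msol_eq t r : 0 < t -> 0 <= r -> msol alpha u0 Pinv t r = msol_c t r.
Proof.
  intros Ht Hr. unfold msol. rewrite <- (RInt_usol_c t r Ht Hr). apply RInt_ext.
  intros z Hz. rewrite Rmin_left, Rmax_right in Hz by exact Hr. apply usol_eq; lra.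
Qed.

Lemma msol_0 r : 0 <= r -> msol alpha u0 Pinv 0 r = mass0 u0 r.
Proof.
  intro Hr. unfold msol. rewrite mass0_eq by exact Hr. unfold mext. apply RInt_ext.
  intros z Hz. rewrite Rmin_left, Rmax_right in Hz by exact Hr.
  rewrite usol_eq by lra. unfold usol_c, Uc. rewrite Qchar_t0, dil_t0, Rpower_1_base, Rmult_1_r.
  reflexivity.
Qed.

Lemma usol_eq' s y : 0 < s -> 0 < y -> usol alpha u0 Pinv s y = usol_c s y.
Proof. intros; apply usol_eq; lra. Qed.

Lemma msol_eq' s y : 0 < s -> 0 < y -> msol alpha u0 Pinv s y = msol_c s y.
Proof. intros; apply msol_eq; lra. Qed.

Lemma usol_cont_closedQ : cont_closedQ (usol alpha u0 Pinv).
Proof.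
  intros p [Hp1 Hp2]. rewrite (usol_eq (fst p) (snd p) Hp1 Hp2).
  apply (filterlim_within_ext closedQ (fun q => usol_c (fst q) (snd q))).
  - intros q [Hq1 Hq2]. symmetry. apply usol_eq; assumption.
  - apply (filterlim_filter_le_1 (F := locally p)); [apply filter_le_within| apply usol_c_cont2].
Qed.

Lemma usol_C1 : C1_openQ (usol alpha u0 Pinv).
Proof.
  apply (C1_openQ_of _ (fun t r => dtu t (Qchar t r)) (fun t r => dru t (Qchar t r))).
  - intros t r Ht Hr. apply (transfer_d1 _ usol_c); [assumption| assumption| exact usol_eq'| apply usol_c_dt; assumption].
  - intros t r Ht Hr. apply (transfer_d2 _ usol_c); [assumption| assumption| exact usol_eq'| apply usol_c_dr; assumption].
  - intros t r Ht Hr. apply (continuous_comp_2 (fun z => fst z) (fun z => Qchar (fst z) (snd z)) dtu);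
      [apply continuous_fst'| apply Qchar_cont2| apply dtu_cont2; [exact Ht| apply Qchar_pos, Hr]].
  - intros t r Ht Hr. apply (continuous_comp_2 (fun z => fst z) (fun z => Qchar (fst z) (snd z)) dru);
      [apply continuous_fst'| apply Qchar_cont2| apply dru_cont2; [exact Ht| apply Qchar_pos, Hr]].
Qed.

Lemma msol_C1 : C1_openQ (msol alpha u0 Pinv).
Proof.
  apply (C1_openQ_of _ (fun t r => - (msol_c t r * rpow (usol_c t r) alpha)) usol_c).
  - intros t r Ht Hr. apply (transfer_d1 _ msol_c); [assumption| assumption| exact msol_eq'| apply msol_c_dt; assumption].
  - intros t r Ht Hr. apply (transfer_d2 _ msol_c); [assumption| assumption| exact msol_eq'| apply msol_c_dr; assumption].
  - intros t r _ _. apply (continuous_opp (fun q => msol_c (fst q) (snd q) * rpow (usol_c (fst q) (snd q)) alpha)).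
    apply (continuous_mult (fun q => msol_c (fst q) (snd q))); [apply msol_c_cont2|].
    apply (continuous_comp (fun q => usol_c (fst q) (snd q)) (fun y => rpow y alpha));
      [apply usol_c_cont2| apply rpow_continuous; lra].
  - intros t r _ _. apply usol_c_cont2.
Qed.

Lemma mass_equation t r : 0 < t -> 0 < r ->
  Derive (fun s => msol alpha u0 Pinv s r) t
  + msol alpha u0 Pinv t r * rpow (Derive (fun y => msol alpha u0 Pinv t y) r) alpha = 0.
Proof.
  intros Ht Hr.
  assert (D1 : Derive (fun s => msol alpha u0 Pinv s r) t = - (msol_c t r * rpow (usol_c t r) alpha))
    by exact (is_derive_unique _ _ _ (transfer_d1 _ msol_c t r _ Ht Hr msol_eq' (msol_c_dt t r Ht Hr))).
  assert (D2 : Derive (fun y => msol alpha u0 Pinv t y) r = usol_c t r)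
    by exact (is_derive_unique _ _ _ (transfer_d2 _ msol_c t r _ Ht Hr msol_eq' (msol_c_dr t r Ht Hr))).
  rewrite D1, D2, msol_eq' by assumption. ring.
Qed.

End AnyInverse.

End InitialDatum.

Theorem mainTheorem1 (alpha : R) (u0 : R -> R) :
  1 < alpha ->
  C1_nonneg u0 ->
  (forall x, 0 <= x -> 0 <= u0 x) ->
  (forall x y, 0 <= x -> x <= y -> u0 x <= u0 y) ->
  (* P_t is a bijection [0,oo) -> [0,oo) with dP_t/drho0 >= 1 *)
  (forall t, 0 <= t ->
     (forall rho0, 0 <= rho0 -> 0 <= Pmap alpha u0 t rho0) /\
     (forall rho, 0 <= rho ->
        exists! rho0, 0 <= rho0 /\ Pmap alpha u0 t rho0 = rho) /\
     (forall rho0, 0 < rho0 ->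
        ex_derive (Pmap alpha u0 t) rho0 /\
        1 <= Derive (Pmap alpha u0 t) rho0)) /\
  (* for the inverse Pinv t = P_t^{-1}, u is continuous and C^1 and m solves
     the mass equation classically *)
  (forall Pinv : R -> R -> R,
     (forall t rho, 0 <= t -> 0 <= rho ->
        0 <= Pinv t rho /\ Pmap alpha u0 t (Pinv t rho) = rho) ->
     cont_closedQ (usol alpha u0 Pinv) /\
     C1_openQ (usol alpha u0 Pinv) /\
     C1_openQ (msol alpha u0 Pinv) /\
     (forall t rho, 0 < t -> 0 < rho ->
        Derive (fun s => msol alpha u0 Pinv s rho) t
        + msol alpha u0 Pinv t rho
          * rpow (Derive (fun r => msol alpha u0 Pinv t r) rho) alpha = 0) /\
     (forall rho, 0 <= rho -> msol alpha u0 Pinv 0 rho = mass0 u0 rho) /\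
     (forall t, 0 <= t -> msol alpha u0 Pinv t 0 = 0)).
Proof.
  intros Ha [u0' [Hd Hc]] Hnn Hmono. split.
  - intros t Ht. eapply Pmap_bijective; eassumption.
  - intros Pinv HP. split; [|split; [|split; [|split; [|split]]]].
    + eapply usol_cont_closedQ; eassumption.
    + eapply usol_C1; eassumption.
    + eapply msol_C1; eassumption.
    + intros t r Ht Hr. eapply mass_equation; eassumption.
    + intros r Hr. eapply msol_0; eassumption.
    + intros t _. unfold msol. rewrite RInt_point. reflexivity.
Qed.
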